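(* Suppose $\mathcal U$ is a smooth and strongly stable EDPM (with smoothness constant $d_2$). Then for any $K,T\ge1$, $$\tilde{\mathcal R}(\pi_{p^*},T)\le\frac{d_2}{2}\max_{i\in\mathbb K}\|F^{(i)}\|^2\,\frac{K^2}{T}.$$ Alternatively, if $\mathcal U$ is quasiconvex, then $p^*$ can be chosen to be a standard basis vector $e_{i^*}$ of $\mathbb R^K$, and for this choice $\tilde{\mathcal R}(\pi_{p^*},T)=0$ for all $T\ge1$.
   Context: Bandit setting: $K\ge1$, $\mathbb K=\{1,\dots,K\}$; arm $i$ produces i.i.d. rewards $X^{(i)}_1,X^{(i)}_2,\dots$ with distribution function $F^{(i)}$, all rewards mutually independent. $\Delta_{K-1}$ is the probability simplex, $F_p=\sum_ip_iF^{(i)}$, $\mathcal D^\Delta=\{F_p:p\in\Delta_{K-1}\}$; $\hat F^{(i)}_t(y)=\frac1t\sum_{s\le t}\mathbf 1\{X^{(i)}_s\le y\}$; $\hat{\mathcal D}$ is the set of empirical distribution functions $y\mapsto\frac1t\sum_{s\le t}\mathbf 1\{x_s\le y\}$ of all finite real sequences. $(L,\|\cdot\|)$ is a Banach space of bounded functions on $\mathbb R$ containing $\mathcal D^\Delta\cup\hat{\mathcal D}$, $\mathcal U:L\to\mathbb R$, and $L(L,\mathbb R)$ is the space of bounded linear functionals on $L$. Strongly stable: (1) there exist $b>0,q\ge1$ with $|\mathcal U(F)-\mathcal U(G)|\le b(\|F-G\|+\|F-G\|^q)$ for all $F\in\mathcal D^\Delta$, $G\in\mathcal D^\Delta\cup\hat{\mathcal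 D}$; (2) there is $a>0$ with $\mathbb P(\|\hat F^{(i)}_t-F^{(i)}\|\ge x)\le2\exp(-atx^2)$ for all $i,x>0,t\ge1$. Smooth: there exist $d_1,d_2\ge0$, $M_0>0$ and a map $A:L\to L(L,\mathbb R)$, $F\mapsto A_F$, such that for every $F\in\mathcal D^\Delta$: $|A_F(G-F)|\le d_1\|G-F\|$ for all $G\in\mathcal D^\Delta\cup\hat{\mathcal D}$, and $|\mathcal U(G)-\mathcal U(F)-A_F(G-F)|\le\frac12d_2\|G-F\|^2$ for all $G\in\mathcal D^\Delta\cup\{f\in\hat{\mathcal D}:\|F-f\|\le M_0\}$. Quasiconvex: $\mathcal U(\lambda F+(1-\lambda)G)\le\max\{\mathcal U(F),\mathcal U(G)\}$. Let $p^*\in\arg\max_{p\in\Delta_{K-1}}\mathcal U(F_p)$. $\pi_{p^*}$ is the policy whose actions $\pi_1,\pi_2,\dots\in\mathbb K$ are i.i.d. (independent of rewards) with $\mathbb P(\pi_t=i)=p^*_i$; $\tau_i(T)=\sum_{t\le T}\mathbf 1\{\pi_t=i\}$, $\tilde F^\pi_T=\frac1T\sum_i\tau_i(T)F^{(i)}$, and $\tilde{\mathcal R}(\pi,T)=\mathbb E[\mathcal U(F_{p^*})-\mathcal U(\tilde F^\pi_T)]$. *)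

From HB Require Import structures.
From mathcomp Require Import all_boot all_order all_algebra.
From mathcomp Require Import all_classical all_reals all_analysis.
Set Implicit Arguments. Unset Strict Implicit. Unset Printing Implicit Defensive.
Import Order.TTheory GRing.Theory Num.Theory.
Import numFieldNormedType.Exports.
Local Open Scope classical_set_scope.
Local Open Scope ring_scope.

Section Bandit.
Variable R : realType.

Definition simplex (K : nat) (p : 'I_K -> R) : Prop :=
  (forall i, 0 <= p i) /\ \sum_(i < K) p i = 1.

Definition basis_vec (K : nat) (i : 'I_K) : 'I_K -> R := fun j => (j == i)%:R.

Definition emp_cdf (s : seq R) : R -> R :=
  fun y => (count (fun x => x <= y) s)%:R / (size s)%:R.

(* The Banach space L is a complete normed space V together with an injective
   linear map iota : V -> (R -> R) whose images are bounded functions. *)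
Definition bounded_fun_space (V : normedModType R) (iota : V -> R -> R) : Prop :=
  (forall (a : R) (v w : V) (y : R), iota (a *: v + w) y = a * iota v y + iota w y)
  /\ injective iota
  /\ (forall v : V, exists M : R, forall y, `|iota v y| <= M).

Variables (K : nat) (V : normedModType R).

Definition mixture (Fv : 'I_K -> V) (p : 'I_K -> R) : V := \sum_(i < K) p i *: Fv i.

Definition DDelta (Fv : 'I_K -> V) : set V := [set mixture Fv p | p in simplex (K:=K)].

Definition Dhat (iota : V -> R -> R) : set V :=
  [set v | exists s : seq R, s != [::] /\ iota v = emp_cdf s].

Definition bounded_linear_functional (f : V -> R) : Prop :=
  (forall (a : R) (v w : V), f (a *: v + w) = a * f v + f w)
  /\ exists C : R, forall v, `|f v| <= C * `|v|.

Definition smooth (U : V -> R) (Fv : 'I_K -> V) (iota : V -> R -> R)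
  (d1 d2 M0 : R) (A : V -> V -> R) : Prop :=
  [/\ 0 <= d1, 0 <= d2, 0 < M0,
      (forall F, bounded_linear_functional (A F)) &
      forall F, DDelta Fv F ->
        (forall G, DDelta Fv G \/ Dhat iota G -> `|A F (G - F)| <= d1 * `|G - F|)
        /\ (forall G, DDelta Fv G \/ (Dhat iota G /\ `|F - G| <= M0) ->
              `|U G - U F - A F (G - F)| <= d2 / 2 * `|G - F| ^+ 2)].

(* the first t rewards X^(i)_1, ..., X^(i)_t of arm i (X i s is X^(i)_{s+1}) *)
Definition samples {T : Type} (X : 'I_K -> nat -> T -> R) (i : 'I_K) (t : nat) (w : T)
  : seq R := [seq X i s w | s <- iota 0 t].

Definition strongly_stable {d} {Omega : measurableType d} (P : probability Omega R)
  (X : 'I_K -> nat -> Omega -> R)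
  (U : V -> R) (Fv : 'I_K -> V) (iota : V -> R -> R) : Prop :=
  (exists b q : R, [/\ 0 < b, 1 <= q &
     forall F G, DDelta Fv F -> DDelta Fv G \/ Dhat iota G ->
       `|U F - U G| <= b * (`|F - G| + `|F - G| `^ q)])
  /\ (exists a : R, 0 < a /\
     forall (i : 'I_K) (x : R) (t : nat), 0 < x -> (1 <= t)%N ->
       fine (P [set w | exists v, iota v = emp_cdf (samples X i t w)
                                  /\ x <= `|v - Fv i|])
         <= 2 * expR (- (a * t%:R * x ^+ 2))).

Definition quasiconvex (U : V -> R) : Prop :=
  forall (F G : V) (l : R), 0 <= l <= 1 ->
    U (l *: F + (1 - l) *: G) <= Num.max (U F) (U G).

Definition is_argmax (U : V -> R) (Fv : 'I_K -> V) (p : 'I_K -> R) : Prop :=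
  simplex p /\ forall q, simplex q -> U (mixture Fv q) <= U (mixture Fv p).

Definition pulls (T : nat) (a : {ffun 'I_T -> 'I_K}) (i : 'I_K) : nat :=
  #|[set t | a t == i]|.

Definition Ftilde (Fv : 'I_K -> V) (T : nat) (a : {ffun 'I_T -> 'I_K}) : V :=
  \sum_(i < K) ((pulls a i)%:R / T%:R) *: Fv i.

(* tilde R(pi_p, T) = E[U(F_p) - U(tilde F^pi_T)], the expectation being over the
   i.i.d. actions pi_1..pi_T with P(pi_t = i) = p_i (the quantity does not
   depend on the rewards). *)
Definition proxy_regret (U : V -> R) (Fv : 'I_K -> V) (p : 'I_K -> R) (T : nat) : R :=
  \sum_(a : {ffun 'I_T -> 'I_K})
     (\prod_(t < T) p (a t)) * (U (mixture Fv p) - U (Ftilde Fv a)).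

End Bandit.

Definition mutually_independent {R : realType} {d} {Omega : measurableType d}
  (P : probability Omega R) {I : eqType} (Y : I -> Omega -> R) : Prop :=
  forall (J : seq I), uniq J -> forall B : I -> set R, (forall j, measurable (B j)) ->
    fine (P (\bigcap_(j in [set` J]) (Y j @^-1` B j)))
    = \prod_(j <- J) fine (P (Y j @^-1` B j)).

From HB Require Import structures.
From mathcomp Require Import all_boot all_order all_algebra.
From mathcomp Require Import all_classical all_reals all_analysis.
From mathcomp Require Import ring lra.

(* Under the policy, the arms pulled are i.i.d. with law p*, so each empirical
   frequency tau_i(T)/T is an average of T independent Bernoulli(p*_i)
   indicators: it is unbiased for p*_i, with variance p*_i (1 - p*_i) / T.
   Both F~ and F_{p*} lie in D^Delta, so the second-order smoothness bound
   at F_{p*} gives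
     U(F_{p*}) - U(F~) <= - A_{F_{p*}}(F~ - F_{p*}) + d2/2 |F~ - F_{p*}|^2.
   The linear term has mean zero, and by the triangle and Cauchy-Schwarz
   inequalities |sum_i c_i F^(i)|^2 <= K max_i |F^(i)|^2 sum_i c_i^2, so the
   quadratic term has mean at most d2/2 max_i |F^(i)|^2 K^2 / T.

   For a quasiconvex U, induction on the number of arms gives
   U(F_p) <= max_i U(F^(i)), so the basis vector of the best arm is a
   maximiser; the corresponding policy always pulls that arm, so F~ is that
   arm's distribution function and the proxy regret vanishes. *)

Set Implicit Arguments.
Unset Strict Implicit.
Unset Printing Implicit Defensive.
Import Order.TTheory GRing.Theory Num.Theory.
Import numFieldNormedType.Exports.
Local Open Scope classical_set_scope.
Local Open Scope ring_scope.

Lemma sqr_sum_le_card (R : realFieldType) (I : finType) (x : I -> R) :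
  (\sum_i x i) ^+ 2 <= #|I|%:R * \sum_i x i ^+ 2.
Proof.
have : 0 <= \sum_i \sum_j (x i - x j) ^+ 2.
  by apply: sumr_ge0 => i _; apply: sumr_ge0 => j _; exact: sqr_ge0.
have sqrB i j : (x i - x j) ^+ 2 = x i ^+ 2 + x j ^+ 2 - (x i * x j) *+ 2.
  by rewrite sqrrB addrAC.
under eq_bigr do under eq_bigr do rewrite sqrB.
under eq_bigr do rewrite sumrB big_split /= sumr_const sumrMnl -mulr_sumr.
rewrite sumrB big_split /= sumr_const sumrMnl.
rewrite sumrMnl -mulr_suml -expr2 (_ : #|xpredT| = #|I|) //.
set S2 := \sum_i _; set S := _ ^+ 2.
rewrite -mulr_natl mulr2n; lra.
Qed.

Section IidExpectation.
Variables (R : realFieldType) (I : finType) (T : nat) (p : I -> R).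

Definition iid_expect (f : {ffun 'I_T -> I} -> R) : R :=
  \sum_(a : {ffun 'I_T -> I}) (\prod_(t < T) p (a t)) * f a.

Lemma eq_iid_expect (f g : {ffun 'I_T -> I} -> R) :
  f =1 g -> iid_expect f = iid_expect g.
Proof. by move=> fg; apply: eq_bigr => a _; rewrite fg. Qed.

Lemma iid_expectD (f g : {ffun 'I_T -> I} -> R) :
  iid_expect (fun a => f a + g a) = iid_expect f + iid_expect g.
Proof. by rewrite -big_split; apply: eq_bigr => a _; rewrite mulrDr. Qed.

Lemma iid_expectZl c (f : {ffun 'I_T -> I} -> R) :
  iid_expect (fun a => c * f a) = c * iid_expect f.
Proof. by rewrite mulr_sumr; apply: eq_bigr => a _; rewrite mulrCA. Qed.

Lemma iid_expectZr (f : {ffun 'I_T -> I} -> R) c :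
  iid_expect (fun a => f a * c) = iid_expect f * c.
Proof. by rewrite mulr_suml; apply: eq_bigr => a _; rewrite mulrA. Qed.

Lemma iid_expectN (f : {ffun 'I_T -> I} -> R) :
  iid_expect (fun a => - f a) = - iid_expect f.
Proof. by rewrite -sumrN; apply: eq_bigr => a _; rewrite mulrN. Qed.

Lemma iid_expect_sum (J : finType) (f : J -> {ffun 'I_T -> I} -> R) :
  iid_expect (fun a => \sum_j f j a) = \sum_j iid_expect (f j).
Proof.
by rewrite /iid_expect; under eq_bigr do rewrite mulr_sumr; exact: exchange_big.
Qed.

Lemma iid_expect_prod (h : 'I_T -> I -> R) :
  iid_expect (fun a => \prod_t h t (a t)) = \prod_t \sum_i p i * h t i.
Proof. by rewrite bigA_distr_bigA; apply: eq_bigr => a _; rewrite big_split. Qed.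

Hypotheses (p_ge0 : forall i, 0 <= p i) (p_sum1 : \sum_i p i = 1).

Lemma ler_iid_expect (f g : {ffun 'I_T -> I} -> R) :
  (forall a, f a <= g a) -> iid_expect f <= iid_expect g.
Proof.
move=> fg; apply: ler_sum => a _; apply: ler_wpM2l => //.
exact: prodr_ge0.
Qed.

Let prod_if_eq (t0 : 'I_T) (g : 'I_T -> R) :
  \prod_(t < T) (if t == t0 then g t else 1) = g t0.
Proof. by rewrite -big_mkcond big_pred1_eq. Qed.

Lemma iid_expect_coord (t : 'I_T) (g : I -> R) :
  iid_expect (fun a => g (a t)) = \sum_i p i * g i.
Proof.
pose h s := if s == t then g else fun=> 1.
have -> : iid_expect (fun a => g (a t)) = iid_expect (fun a => \prod_s h s (a s)).
  apply: eq_iid_expect => a; rewrite -(prod_if_eq t (fun s => g (a s))).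
  by apply: eq_bigr => s _; rewrite /h; case: eqP.
have others : \prod_(s < T | s != t) \sum_i p i * h s i = 1.
  by apply: big1 => s /negbTE hs; rewrite /h hs; under eq_bigr do rewrite mulr1.
by rewrite iid_expect_prod (bigD1 t) //= others mulr1 /h eqxx.
Qed.

Lemma iid_expect_coordM (t s : 'I_T) (g g' : I -> R) : t != s ->
  iid_expect (fun a => g (a t) * g' (a s)) = (\sum_i p i * g i) * (\sum_i p i * g' i).
Proof.
move=> ts; have st : (s == t) = false by rewrite eq_sym (negbTE ts).
pose h r := if r == t then g else if r == s then g' else fun=> 1.
have -> : iid_expect (fun a => g (a t) * g' (a s)) =
          iid_expect (fun a => \prod_r h r (a r)).
  apply: eq_iid_expect => a; rewrite (bigD1 t) // (bigD1 s) 1?eq_sym //= big1.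
    by rewrite /h !eqxx st mulr1.
  by move=> r /andP[/negbTE rt /negbTE rs]; rewrite /h rt rs.
have others : \prod_(r < T | (r != t) && (r != s)) \sum_i p i * h r i = 1.
  apply: big1 => r /andP[/negbTE rt /negbTE rs].
  by rewrite /h rt rs; under eq_bigr do rewrite mulr1.
rewrite iid_expect_prod (bigD1 t) // (bigD1 s) 1?eq_sym //= others mulr1.
by rewrite /h !eqxx st.
Qed.

Section CenteredIndicator.
Variable i : I.

Let centered (j : I) : R := (j == i)%:R - p i.

Let mean_centered : \sum_j p j * centered j = 0.
Proof.
rewrite /centered; under eq_bigr do rewrite mulrBr.
rewrite sumrB -mulr_suml p_sum1 mul1r (bigD1 i) //= eqxx mulr1 big1 ?addr0 ?subrr //.
by move=> j /negbTE ->; rewrite mulr0.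
Qed.

Let var_centered : \sum_j p j * (centered j * centered j) = p i * (1 - p i).
Proof.
have sq j : centered j * centered j = (j == i)%:R * (1 - p i *+ 2) + p i ^+ 2.
  by rewrite /centered; case: (j == i) => /=; ring.
under eq_bigr do rewrite sq mulrDr mulrA.
rewrite big_split /= -mulr_suml -mulr_suml p_sum1 mul1r (bigD1 i) //= eqxx mulr1.
rewrite big1 ?addr0; first by rewrite mulr2n; ring.
by move=> j /negbTE ->; rewrite mulr0.
Qed.

Lemma iid_expect_centered (t : 'I_T) :
  iid_expect (fun a => (a t == i)%:R - p i) = 0.
Proof. exact: etrans (iid_expect_coord t centered) mean_centered. Qed.

Lemma iid_expect_sum_centered_sqr :
  iid_expect (fun a => (\sum_(t < T) ((a t == i)%:R - p i)) ^+ 2) =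
  T%:R * (p i * (1 - p i)).
Proof.
have cross t s : iid_expect (fun a => centered (a t) * centered (a s)) =
                 if s == t then p i * (1 - p i) else 0.
  have [->|st] := eqVneq s t.
    by rewrite (iid_expect_coord t (fun j => centered j * centered j)) var_centered.
  by rewrite iid_expect_coordM 1?eq_sym // mean_centered mul0r.
transitivity (iid_expect (fun a => \sum_t \sum_s centered (a t) * centered (a s))).
  apply: eq_iid_expect => a; rewrite expr2 mulr_suml.
  by apply: eq_bigr => t _; rewrite mulr_sumr.
rewrite iid_expect_sum; under eq_bigr do rewrite iid_expect_sum.
under eq_bigr => t _ do under eq_bigr => s _ do rewrite cross.
under eq_bigr => t _ do rewrite -big_mkcond big_pred1_eq.
by rewrite sumr_const card_ord mulr_natl.
Qed.

End CenteredIndicator.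

End IidExpectation.

Lemma simplex_basis_vec (R : realType) K (i : 'I_K) : simplex (basis_vec R i).
Proof.
split=> [j|]; first by rewrite /basis_vec ler0n.
rewrite (bigD1 i) //= /basis_vec eqxx big1 ?addr0 //.
by move=> j /negbTE ->.
Qed.

Lemma quasiconvex_sum_le (R : realType) (V : normedModType R) (U : V -> R) m n
    (w : 'I_n -> R) (G : 'I_n -> V) :
  quasiconvex U -> (forall j, 0 <= w j) -> \sum_j w j = 1 ->
  (forall j, U (G j) <= m) -> U (\sum_j w j *: G j) <= m.
Proof.
move=> U_qc; elim: n w G => [|n IHn] w G w_ge0 w_sum1 G_le.
  by move: w_sum1; rewrite big_ord0 => /eqP; rewrite eq_sym oner_eq0.
rewrite big_ord_recl; rewrite big_ord_recl in w_sum1.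
set s := \sum_(i < n) w (lift ord0 i) in w_sum1.
have s_ge0 : 0 <= s by apply: sumr_ge0.
have [s0|s_neq0] := eqVneq s 0.
  have w_tail0 := psumr_eq0P (fun i _ => w_ge0 (lift ord0 i)) s0.
  rewrite big1 ?addr0; last by move=> i _; rewrite w_tail0 // scale0r.
  by rewrite (_ : w ord0 = 1) ?scale1r // -w_sum1 s0 addr0.
set H := \sum_(i < n) (w (lift ord0 i) / s) *: G (lift ord0 i).
have H_le : U H <= m.
  apply: IHn => // [j|]; first exact: divr_ge0.
  by rewrite -mulr_suml divff.
have -> : \sum_(i < n) w (lift ord0 i) *: G (lift ord0 i) = (1 - w ord0) *: H.
  rewrite (_ : 1 - w ord0 = s); last by rewrite -w_sum1; ring.
  rewrite /H scaler_sumr; apply: eq_bigr => i _.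
  by rewrite scalerA mulrCA divff ?mulr1.
have w0_unit : 0 <= w ord0 <= 1 by apply/andP; split => //; lra.
by apply: le_trans (U_qc _ _ _ w0_unit) _; rewrite ge_max H_le G_le.
Qed.

Section Bandit.
Variables (R : realType) (K : nat) (V : normedModType R) (Fv : 'I_K -> V).

Local Notation max_sqr_norm := (\big[Num.max/0]_(i < K) `|Fv i| ^+ 2).

Lemma normr_mixture_sqr_le (c : 'I_K -> R) :
  `|mixture Fv c| ^+ 2 <= K%:R * max_sqr_norm * \sum_i c i ^+ 2.
Proof.
have tri : `|mixture Fv c| <= \sum_i `|c i| * `|Fv i|.
  by apply: le_trans (ler_norm_sum _ _ _) _; apply: ler_sum => i _; rewrite normrZ.
apply: (@le_trans _ _ ((\sum_i `|c i| * `|Fv i|) ^+ 2)).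
  by rewrite !expr2; apply: ler_pM.
apply: le_trans (sqr_sum_le_card (fun i => `|c i| * `|Fv i|)) _.
rewrite card_ord -mulrA ler_wpM2l //.
rewrite mulr_sumr; apply: ler_sum => i _.
rewrite exprMn real_normK ?num_real // mulrC ler_wpM2r ?sqr_ge0 //.
exact: (le_bigmax _ (fun j => `|Fv j| ^+ 2)).
Qed.

Lemma linear_functional_mixture (f : V -> R) (c : 'I_K -> R) :
  bounded_linear_functional f -> f (mixture Fv c) = \sum_i c i * f (Fv i).
Proof.
move=> [f_lin _].
have f0 : f 0 = 0 by have := f_lin 1 0 0; rewrite scale1r addr0 mul1r; lra.
by apply: (big_rec2 (fun v y => f v = y)) => // i v y _ <-; exact: f_lin.
Qed.

Lemma mixtureB (p q : 'I_K -> R) :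
  mixture Fv q - mixture Fv p = mixture Fv (fun i => q i - p i).
Proof. by rewrite -sumrB; apply: eq_bigr => i _; rewrite scalerBl. Qed.

Lemma smooth_mixture_gap_le (U : V -> R) (iota : V -> R -> R) d1 d2 M0 A
    (p q : 'I_K -> R) :
  smooth U Fv iota d1 d2 M0 A -> simplex p -> simplex q ->
  U (mixture Fv p) - U (mixture Fv q) <=
    - \sum_i (q i - p i) * A (mixture Fv p) (Fv i)
    + d2 / 2 * (K%:R * max_sqr_norm * \sum_i (q i - p i) ^+ 2).
Proof.
move=> [_ d2_ge0 _ A_lin taylor] p_simplex q_simplex.
have [_ /(_ (mixture Fv q)) ] := taylor _ (ex_intro2 _ _ p p_simplex erefl).
move=> /(_ (or_introl (ex_intro2 _ _ q q_simplex erefl))).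
rewrite mixtureB (linear_functional_mixture _ (A_lin _)) ler_norml => /andP[lower _].
have := normr_mixture_sqr_le (fun i => q i - p i).
move/(ler_wpM2l (divr_ge0 d2_ge0 (ler0n _ 2))).
lra.
Qed.

Lemma mixture_basis_vec i : mixture Fv (basis_vec R i) = Fv i.
Proof.
rewrite /mixture (bigD1 i) //= /basis_vec eqxx scale1r big1 ?addr0 //.
by move=> j /negbTE ->; rewrite scale0r.
Qed.

Lemma is_argmax_basis_vec (U : V -> R) i :
  quasiconvex U -> (forall j, U (Fv j) <= U (Fv i)) -> is_argmax U Fv (basis_vec R i).
Proof.
move=> U_qc i_max; split=> [|q [q_ge0 q_sum1]]; first exact: simplex_basis_vec.
by rewrite mixture_basis_vec; exact: quasiconvex_sum_le.
Qed.

Variable T : nat.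
Implicit Type a : {ffun 'I_T -> 'I_K}.

Definition pull_freq a (i : 'I_K) : R := (pulls a i)%:R / T%:R.

Lemma pullsE a i : (pulls a i)%:R = \sum_(t < T) (a t == i)%:R :> R.
Proof.
rewrite /pulls -sum1_card natr_sum big_mkcond; apply: eq_bigr => t _.
by rewrite unfold_in /= asboolb; case: (a t == i).
Qed.

Lemma sum_pulls a : \sum_i (pulls a i)%:R = T%:R :> R.
Proof.
under eq_bigr do rewrite pullsE.
rewrite exchange_big /= -[T in RHS]card_ord -sumr_const.
apply: eq_bigr => t _; rewrite (bigD1 (a t)) //= eqxx big1 ?addr0 // => j.
by rewrite eq_sym => /negbTE ->.
Qed.

Hypothesis T_gt0 : (0 < T)%N.

Lemma pull_freq_simplex a : simplex (pull_freq a).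
Proof.
split=> [i|]; first exact: divr_ge0.
by rewrite -mulr_suml sum_pulls divff // pnatr_eq0 -lt0n.
Qed.

Lemma pull_freq_subr a (p : 'I_K -> R) i :
  pull_freq a i - p i = T%:R^-1 * \sum_(t < T) ((a t == i)%:R - p i).
Proof.
rewrite sumrB -pullsE sumr_const card_ord -mulr_natl /pull_freq.
by field; rewrite pnatr_eq0 -lt0n.
Qed.

Section Moments.
Variable p : 'I_K -> R.
Hypothesis p_simplex : simplex p.

Lemma iid_expect_pull_freq_dev i : iid_expect p (fun a => pull_freq a i - p i) = 0.
Proof.
have [_ p_sum1] := p_simplex.
under eq_iid_expect do rewrite pull_freq_subr.
rewrite iid_expectZl iid_expect_sum big1 ?mulr0 // => t _.
exact: iid_expect_centered.
Qed.

Lemma iid_expect_pull_freq_dev_sqr i :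
  iid_expect p (fun a => (pull_freq a i - p i) ^+ 2) = p i * (1 - p i) / T%:R.
Proof.
have [_ p_sum1] := p_simplex.
under eq_iid_expect do rewrite pull_freq_subr exprMn.
rewrite iid_expectZl iid_expect_sum_centered_sqr //.
by field; rewrite pnatr_eq0 -lt0n.
Qed.

End Moments.

Lemma pull_freq_const a i : (forall t, a t = i) -> pull_freq a = basis_vec R i.
Proof.
move=> a_const; apply/funext => j; rewrite /pull_freq pullsE /basis_vec.
under eq_bigr do rewrite a_const.
rewrite sumr_const card_ord eq_sym; case: (j == i) => /=.
  by rewrite divff // pnatr_eq0 -lt0n.
by rewrite mul0rn mul0r.
Qed.

Lemma proxy_regret_basis_vec (U : V -> R) i : proxy_regret U Fv (basis_vec R i) T = 0.
Proof.
apply: big1 => a _; have [a_const|] := boolP [forall t, a t == i].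
  rewrite /Ftilde -/(mixture Fv (pull_freq a)) (pull_freq_const (a:=a) (i:=i)).
    by rewrite subrr mulr0.
  by move=> t; apply/eqP; exact: (forallP a_const).
by move=> /forallPn[t a_t]; rewrite (bigD1 t) //= /basis_vec (negbTE a_t) !mul0r.
Qed.

Lemma proxy_regret_le_smooth (U : V -> R) (iota : V -> R -> R) d1 d2 M0 A
    (p : 'I_K -> R) :
  smooth U Fv iota d1 d2 M0 A -> simplex p ->
  proxy_regret U Fv p T <= d2 / 2 * max_sqr_norm * (K%:R ^+ 2 / T%:R).
Proof.
move=> U_smooth p_simplex; have [p_ge0 _] := p_simplex.
have d2_ge0 : 0 <= d2 by case: U_smooth.
have M_ge0 : 0 <= max_sqr_norm by exact: bigmax_ge_id.
(* [proxy_regret U Fv p T] unfolds to [iid_expect p] of the gap. *)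
apply: le_trans (ler_iid_expect p_ge0 (fun a =>
  smooth_mixture_gap_le U_smooth p_simplex (pull_freq_simplex a))) _.
rewrite iid_expectD iid_expectN iid_expect_sum.
under eq_bigr do rewrite iid_expectZr iid_expect_pull_freq_dev // mul0r.
rewrite big1_eq oppr0 add0r 2!iid_expectZl iid_expect_sum.
rewrite (eq_bigr _ (fun i _ => iid_expect_pull_freq_dev_sqr p_simplex i)).
have var_le : \sum_i p i * (1 - p i) / T%:R <= K%:R / T%:R.
  have bernoulli_var_le1 i : p i * (1 - p i) <= 1 by nra.
  rewrite -mulr_suml ler_wpM2r ?invr_ge0 ?ler0n //.
  apply: le_trans (ler_sum _ (fun i _ => bernoulli_var_le1 i)) _.
  by rewrite sumr_const card_ord.
have -> : d2 / 2 * max_sqr_norm * (K%:R ^+ 2 / T%:R) =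
          d2 / 2 * (K%:R * max_sqr_norm * (K%:R / T%:R)) by ring.
by rewrite ler_wpM2l ?divr_ge0 // ler_wpM2l ?mulr_ge0.
Qed.

End Bandit.

Theorem proposition17 (R : realType) (K : nat) (hK : (0 < K)%N)
  (V : completeNormedModType R) (iota : V -> R -> R)
  (hL : bounded_fun_space iota)
  (Fv : 'I_K -> V)
  (hDhat : forall s : seq R, s != [::] -> exists v : V, iota v = emp_cdf s)
  (d : measure_display) (Omega : measurableType d) (P : probability Omega R)
  (X : 'I_K -> nat -> Omega -> R)
  (hXmeas : forall i s, measurable_fun setT (X i s))
  (hXind : mutually_independent P (fun js : 'I_K * nat => X js.1 js.2))
  (hXcdf : forall i s y, fine (P [set w | X i s w <= y]) = iota (Fv i) y)
  (U : V -> R) :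
  (forall (d1 d2 M0 : R) (A : V -> V -> R),
     smooth U Fv iota d1 d2 M0 A ->
     strongly_stable P X U Fv iota ->
     forall pstar : 'I_K -> R, is_argmax U Fv pstar ->
     forall T : nat, (1 <= T)%N ->
       proxy_regret U Fv pstar T
         <= d2 / 2 * (\big[Num.max/0]_(i < K) `|Fv i| ^+ 2) * (K%:R ^+ 2 / T%:R))
  /\
  (quasiconvex U ->
     exists istar : 'I_K,
       is_argmax U Fv (basis_vec R istar)
       /\ forall T : nat, (1 <= T)%N -> proxy_regret U Fv (basis_vec R istar) T = 0).
Proof.
split=> [d1 d2 M0 A U_smooth _ pstar [pstar_simplex _] T T_gt0 | U_qc].
  exact: proxy_regret_le_smooth U_smooth pstar_simplex.
have [istar _ istar_max] := @arg_maxP _ _ _ (Ordinal hK) xpredT (fun i => U (Fv i)) isT.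
exists istar; split; first exact: is_argmax_basis_vec U_qc (fun j => istar_max j isT).
by move=> T T_gt0; exact: proxy_regret_basis_vec.
Qed.
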